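(* Let $X$ be a set and $\varphi_P\in\Im(P(X))$. Then $\varphi_P$ is a pre-subbase of some fuzzifying topology on $X$ if and only if $\varphi_P^{(\cup)}(X)=1$, where $\varphi_P^{(\cup)}(A)=\bigvee\{\bigwedge_{\lambda\in\Lambda}\varphi_P(B_\lambda):\bigcup_{\lambda\in\Lambda}B_\lambda=A\}$.
   Context: $\Im(Y)$ denotes the fuzzy subsets $Y\to[0,1]$ and $P(X)$ the power set. A fuzzifying topology on $X$ is $T\in\Im(P(X))$ with $T(X)=1$, $T(A\cap B)\ge\min(T(A),T(B))$ and $T(\bigcup_\lambda A_\lambda)\ge\inf_\lambda T(A_\lambda)$. A fuzzy family $\beta\in\Im(P(X))$ is a pre-base of $T$ if $\beta\le T$ pointwise and for all $x\in X$, $A\subseteq X$: $\sup_{x\in B\subseteq A}T(B)\le\sup_{x\in B\subseteq A}\beta(B)$. For $\varphi_P\in\Im(P(X))$ define $\varphi_P^{\Cap}(A)=\sup\{\min_{1\le i\le n}\varphi_P(B_i): n\ge1,\ B_1,\dots,B_n\subseteq X,\ \bigcap_{i=1}^nB_i=A\}$; $\varphi_P$ is a pre-subbase of $T$ if $\varphi_P^{\Cap}$ is a pre-base of $T$. *)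

From HB Require Import structures.
From mathcomp Require Import all_boot all_order all_algebra.
From mathcomp Require Import classical_sets boolp reals.
Set Implicit Arguments. Unset Strict Implicit. Unset Printing Implicit Defensive.
Import Order.TTheory GRing.Theory Num.Theory.
Local Open Scope classical_set_scope.
Local Open Scope ring_scope.

Section FuzzyDefs.
Variable R : realType.

(* Supremum and infimum in the complete lattice [0,1]:
   the empty sup is 0 and the empty inf is 1. *)
Definition sup01 (S : set R) : R := if pselect (S = set0) then 0 else sup S.
Definition inf01 (S : set R) : R := if pselect (S = set0) then 1 else inf S.

Variable X : Type.

Definition fuzzy_family (T : set X -> R) : Prop := forall A, 0 <= T A <= 1.

(* Arbitrary indexed families {A_lambda} are represented by the set of their
   members F : set (set X); union and infimum depend only on this set. *)
Definition fuzzifying_topology (T : set X -> R) : Prop :=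
  [/\ fuzzy_family T,
      T setT = 1,
      (forall A B, Num.min (T A) (T B) <= T (A `&` B)) &
      (forall F : set (set X), inf01 (T @` F) <= T (\bigcup_(B in F) B))].

Definition nbhd_sup (T : set X -> R) (x : X) (A : set X) : R :=
  sup01 (T @` [set B | B x /\ B `<=` A]).

Definition pre_base (T beta : set X -> R) : Prop :=
  fuzzy_family beta /\
  (forall A, beta A <= T A) /\
  (forall x A, nbhd_sup T x A <= nbhd_sup beta x A).

Definition fin_cap_closure (phi : set X -> R) (A : set X) : R :=
  sup01 [set m | exists (n : nat) (B : 'I_n.+1 -> set X),
           \bigcap_(i in [set: 'I_n.+1]) B i = A /\
           m = \big[Num.min/1]_(i < n.+1) phi (B i)].

Definition pre_subbase (T phi : set X -> R) : Prop :=
  pre_base T (fin_cap_closure phi).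

Definition union_closure (phi : set X -> R) (A : set X) : R :=
  sup01 [set m | exists F : set (set X),
           \bigcup_(B in F) B = A /\ m = inf01 (phi @` F)].

End FuzzyDefs.

(* A fuzzy family beta that is closed under binary minima and satisfies
   sup {beta B | x \in B} = 1 at every point x is a pre-base of the fuzzifying
   topology T(A) = inf_{x \in A} sup {beta B | x \in B \subseteq A}; conversely,
   any pre-base beta of a fuzzifying topology T satisfies this covering condition,
   because 1 = T(X) <= sup {T B | x \in B} <= sup {beta B | x \in B}.
   For beta = phi^{cap}, which is always closed under minima (concatenate the two
   finite families), the covering condition holds iff it holds for phi, since
   every finite intersection containing x lies in each of its members; and for phi
   it is equivalent to phi^{(cup)}(X) = 1, the level sets {B | r <= phi B}, r < 1,
   being covers of X. *)
From mathcomp Require Import all_boot all_order all_algebra.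
From mathcomp Require Import classical_sets boolp reals unstable.
Import Order.TTheory GRing.Theory Num.Theory.
Local Open Scope classical_set_scope.
Local Open Scope ring_scope.

Section UnitIntervalBounds.
Context {R : realType}.
Implicit Types (S : set R) (r s : R).

Definition in01 S := forall s, S s -> 0 <= s <= 1.

Lemma sup01_cases S : (S = set0 /\ sup01 S = 0) \/ (S !=set0 /\ sup01 S = sup S).
Proof.
rewrite /sup01; case: pselect => [S0|nS0]; [left|right]; split=> //.
by apply/set0P/eqP.
Qed.

Lemma inf01_cases S : (S = set0 /\ inf01 S = 1) \/ (S !=set0 /\ inf01 S = inf S).
Proof.
rewrite /inf01; case: pselect => [S0|nS0]; [left|right]; split=> //.
by apply/set0P/eqP.
Qed.

Lemma ge_sup01 S r : 0 <= r -> (forall s, S s -> s <= r) -> sup01 S <= r.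
Proof. by move=> r0 Sr; case: (sup01_cases S) => -[S0 ->] //; apply: ge_sup. Qed.

Lemma le_sup01 {S s} : in01 S -> S s -> s <= sup01 S.
Proof.
move=> S01 Ss; case: (sup01_cases S) => -[S0 ->]; first by rewrite S0 in Ss.
by apply: ub_le_sup => //; exists 1 => t /S01 /andP[].
Qed.

Lemma sup01_gt {S r} : 0 <= r -> r < sup01 S -> exists2 s, S s & r < s.
Proof.
move=> r0; case: (sup01_cases S) => -[S0 ->]; last exact: sup_gt.
by rewrite ltNge r0.
Qed.

Lemma sup01_in01 {S} : in01 S -> 0 <= sup01 S <= 1.
Proof.
move=> S01; apply/andP; split; last by apply: ge_sup01 => // s /S01 /andP[].
case: (sup01_cases S) => -[S0 sup0]; first by rewrite sup0.
have [s Ss] := S0; have /andP[s0 _] := S01 s Ss.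
exact: le_trans s0 (le_sup01 S01 Ss).
Qed.

Lemma sup01_eq1 S : in01 S ->
  sup01 S = 1 <-> (forall r, 0 <= r -> r < 1 -> exists2 s, S s & r <= s).
Proof.
move=> S01; split=> [S1 r r0 r1|Sgt].
  have rS : r < sup01 S by rewrite S1.
  by have [s Ss /ltW rs] := sup01_gt r0 rS; exists s.
apply/eqP; rewrite eq_le; have /andP[_ -> /=] := sup01_in01 S01.
apply/ler_ltP => r r1; have [r0|r0] := lerP 0 r.
  by have [s Ss rs] := Sgt r r0 r1; apply: le_trans rs (le_sup01 S01 Ss).
have [s Ss _] := Sgt 0 (lexx 0) ltr01.
by apply: le_trans (ltW r0) _; have /andP[] := sup01_in01 S01.
Qed.

Lemma min_sup01_le S1 S2 S3 : in01 S1 -> in01 S2 -> in01 S3 ->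
  (forall a b, S1 a -> S2 b -> exists2 c, S3 c & Num.min a b <= c) ->
  Num.min (sup01 S1) (sup01 S2) <= sup01 S3.
Proof.
move=> S1_01 S2_01 S3_01 S123; have /andP[sup3_ge0 _] := sup01_in01 S3_01.
case: (sup01_cases S1) => -[S10 ->]; first by rewrite ge_min sup3_ge0.
case: (sup01_cases S2) => -[S20 ->]; first by rewrite ge_min sup3_ge0 orbT.
apply/ler_ltP => r; rewrite lt_min => /andP[/(sup_gt S10)[a Sa ra]].
move=> /(sup_gt S20)[b Sb rb]; have [c Sc abc] := S123 a b Sa Sb.
apply: ltW; apply: lt_le_trans (le_trans abc (le_sup01 S3_01 Sc)).
by rewrite lt_min ra rb.
Qed.

Lemma le_inf01 S r : r <= 1 -> (forall s, S s -> r <= s) -> r <= inf01 S.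
Proof.
by move=> r1 rS; case: (inf01_cases S) => -[S0 ->] //; apply: lb_le_inf.
Qed.

Lemma inf01_le {S s} : in01 S -> S s -> inf01 S <= s.
Proof.
move=> S01 Ss; case: (inf01_cases S) => -[S0 ->]; first by rewrite S0 in Ss.
by apply: ge_inf => //; exists 0 => t /S01 /andP[].
Qed.

Lemma inf01_in01 {S} : in01 S -> 0 <= inf01 S <= 1.
Proof.
move=> S01; apply/andP; split; first by apply: le_inf01 => [|s /S01 /andP[]].
case: (inf01_cases S) => -[S0 inf1]; first by rewrite inf1.
have [s Ss] := S0; have /andP[_ s1] := S01 s Ss.
exact: le_trans (inf01_le S01 Ss) s1.
Qed.

End UnitIntervalBounds.

Section FuzzyFamilies.
Context {R : realType} {X : Type}.
Implicit Types (T beta phi : set X -> R) (A B C : set X) (x : X).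

Definition min_closed T := forall A B, Num.min (T A) (T B) <= T (A `&` B).

Definition covering T := forall x, nbhd_sup T x setT = 1.

Lemma fuzzy_image {T} (F : set (set X)) : fuzzy_family T -> in01 (T @` F).
Proof. by move=> T01 _ [A _ <-]. Qed.

Lemma nbhd_sup_in01 {T} x A : fuzzy_family T -> 0 <= nbhd_sup T x A <= 1.
Proof. by move=> T01; apply/sup01_in01/fuzzy_image. Qed.

Lemma nbhd_sup_ge {T x A B} : fuzzy_family T -> B x -> B `<=` A ->
  T B <= nbhd_sup T x A.
Proof. by move=> T01 Bx BA; apply: (le_sup01 (fuzzy_image _ T01)); exists B. Qed.

Lemma nbhd_supS {T x A A'} : fuzzy_family T -> A `<=` A' ->
  nbhd_sup T x A <= nbhd_sup T x A'.
Proof.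
move=> T01 AA'; apply: ge_sup01; first by have /andP[] := nbhd_sup_in01 x A' T01.
move=> _ [B [Bx BA] <-]; exact: nbhd_sup_ge (subset_trans BA AA').
Qed.

Lemma nbhd_sup_homo T T' x A : fuzzy_family T' -> (forall B, T B <= T' B) ->
  nbhd_sup T x A <= nbhd_sup T' x A.
Proof.
move=> T'01 TT'; apply: ge_sup01; first by have /andP[] := nbhd_sup_in01 x A T'01.
by move=> _ [B [Bx BA] <-]; apply: le_trans (TT' B) (nbhd_sup_ge T'01 Bx BA).
Qed.

Lemma nbhd_sup_min {T} x A B : fuzzy_family T -> min_closed T ->
  Num.min (nbhd_sup T x A) (nbhd_sup T x B) <= nbhd_sup T x (A `&` B).
Proof.
move=> T01 Tmin; apply: min_sup01_le; try exact: fuzzy_image.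
move=> _ _ [C1 [C1x C1A] <-] [C2 [C2x C2B] <-].
exists (T (C1 `&` C2)); last exact: Tmin.
by exists (C1 `&` C2) => //; split=> // y [/C1A ? /C2B ?].
Qed.

Lemma covering_pre_base {T beta} : fuzzifying_topology T -> pre_base T beta ->
  covering beta.
Proof.
move=> [T01 TX _ _] [beta01 [_ Tbeta]] x; apply/eqP.
rewrite eq_le; have /andP[_ -> /=] := nbhd_sup_in01 x setT beta01.
by rewrite -TX (le_trans (nbhd_sup_ge T01 _ _) (Tbeta x setT)).
Qed.

Section GeneratedTopology.
Variable beta : set X -> R.
Hypotheses (beta01 : fuzzy_family beta) (beta_min : min_closed beta).

Definition generated_topology A := inf01 [set nbhd_sup beta x A | x in A].

Lemma generated_topology_in01 A : 0 <= generated_topology A <= 1.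
Proof. by apply: inf01_in01 => _ [x _ <-]; apply: nbhd_sup_in01. Qed.

Lemma generated_topology_le {A x} :
  A x -> generated_topology A <= nbhd_sup beta x A.
Proof.
move=> Ax; apply: inf01_le; last by exists x.
by move=> _ [y _ <-]; apply: nbhd_sup_in01.
Qed.

Lemma fuzzifying_topology_generated :
  covering beta -> fuzzifying_topology generated_topology.
Proof.
move=> beta_cov; split.
- exact: generated_topology_in01.
- apply/eqP; rewrite eq_le; have /andP[_ -> /=] := generated_topology_in01 setT.
  by apply: le_inf01 => // _ [x _ <-]; rewrite beta_cov.
- move=> A B; apply: le_inf01 => [|_ [x [Ax Bx] <-]].
    by rewrite ge_min; have /andP[_ ->] := generated_topology_in01 A.
  apply: le_trans (nbhd_sup_min x A B beta01 beta_min).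
  by rewrite le_min !ge_min !generated_topology_le ?orbT.
- move=> F; apply: le_inf01 => [|_ [x [A FA Ax] <-]].
    by have /andP[] := inf01_in01 (fuzzy_image F generated_topology_in01).
  have FT : inf01 (generated_topology @` F) <= generated_topology A.
    by apply: (inf01_le (fuzzy_image F generated_topology_in01)); exists A.
  apply: le_trans FT (le_trans (generated_topology_le Ax) _).
  by apply: nbhd_supS => // y Ay; exists A.
Qed.

Lemma pre_base_generated : pre_base generated_topology beta.
Proof.
split=> //; split=> [A|x A].
  apply: le_inf01 => [|_ [x Ax <-]]; first by have /andP[] := beta01 A.
  exact: nbhd_sup_ge.
have /andP[N0 _] := nbhd_sup_in01 x A beta01.
apply: ge_sup01 => // _ [B [Bx BA] <-].
exact: le_trans (generated_topology_le Bx) (nbhd_supS beta01 BA).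
Qed.

End GeneratedTopology.

Section FiniteIntersections.
Variable phi : set X -> R.
Hypothesis phi01 : fuzzy_family phi.

Definition fin_cap_values A := [set m | exists (n : nat) (B : 'I_n.+1 -> set X),
  \bigcap_(i in [set: 'I_n.+1]) B i = A /\ m = \big[Num.min/1]_(i < n.+1) phi (B i)].

Lemma fin_cap_values_in01 A : in01 (fin_cap_values A).
Proof.
move=> _ [n [B [_ ->]]]; apply/andP; split; last exact: bigmin_le_id.
by apply: le_bigmin => // i _; have /andP[] := phi01 (B i).
Qed.

Lemma fuzzy_fin_cap_closure : fuzzy_family (fin_cap_closure phi).
Proof. by move=> A; apply/sup01_in01/fin_cap_values_in01. Qed.

Lemma fin_cap_closure_ge A : phi A <= fin_cap_closure phi A.
Proof.
apply: le_trans (le_sup01 (fin_cap_values_in01 A) _); last first.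
  exists 0%N, (fun=> A); split; last by [].
  by apply/seteqP; split=> [y /(_ ord0 I)|y Ay i _].
by apply: le_bigmin => //; have /andP[] := phi01 A.
Qed.

Lemma fin_cap_values_min A B m1 m2 : fin_cap_values A m1 -> fin_cap_values B m2 ->
  exists2 m, fin_cap_values (A `&` B) m & Num.min m1 m2 <= m.
Proof.
move=> [n1 [B1 [<- ->]]] [n2 [B2 [<- ->]]].
pose C (i : 'I_(n1.+1 + n2.+1)) :=
  match split i with inl j => B1 j | inr k => B2 k end.
exists (\big[Num.min/1]_(i < (n1 + n2.+1).+1) phi (C i)).
  exists (n1 + n2.+1)%N, C; split=> //; apply/seteqP; split=> y.
  - move=> Cy; split=> i _.
    + by have := Cy (unsplit (inl i : 'I_n1.+1 + 'I_n2.+1)) I; rewrite /C unsplitK.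
    + by have := Cy (unsplit (inr i : 'I_n1.+1 + 'I_n2.+1)) I; rewrite /C unsplitK.
  - by move=> [B1y B2y] i _; rewrite /C; case: split => j; [apply: B1y|apply: B2y].
apply: le_bigmin => [|i _]; first by rewrite ge_min bigmin_le_id.
by rewrite /C; case: split => j; rewrite ge_min bigmin_le ?orbT.
Qed.

Lemma min_closed_fin_cap_closure : min_closed (fin_cap_closure phi).
Proof.
move=> A B; apply: min_sup01_le; try exact: fin_cap_values_in01.
exact: fin_cap_values_min.
Qed.

Lemma nbhd_sup_fin_cap_closure_setT x :
  nbhd_sup (fin_cap_closure phi) x setT = nbhd_sup phi x setT.
Proof.
apply/eqP; rewrite eq_le (nbhd_sup_homo _ _ _ _ fuzzy_fin_cap_closure) ?andbT;
  last exact: fin_cap_closure_ge.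
have /andP[N0 _] := nbhd_sup_in01 x setT phi01.
apply: ge_sup01 => // _ [A [Ax _] <-]; apply: ge_sup01 => // _ [n [B [EB ->]]].
have B0x : B ord0 x by move: Ax; rewrite -EB => /(_ ord0 I).
exact: le_trans (bigmin_le _ ord0 _) (nbhd_sup_ge phi01 B0x (subsetT _)).
Qed.

Lemma union_closure_setT_eq1 : union_closure phi setT = 1 <-> covering phi.
Proof.
have U01 : in01 [set m | exists F : set (set X),
    \bigcup_(B in F) B = setT /\ m = inf01 (phi @` F)].
  by move=> _ [F [_ ->]]; apply/inf01_in01/fuzzy_image.
rewrite /union_closure sup01_eq1 //; split=> [U x|cov r r0 r1].
  apply/sup01_eq1 => [|r r0 r1]; first exact: fuzzy_image.
  have [_ [F [UF ->]] rF] := U r r0 r1.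
  have [B FB Bx] : (\bigcup_(B in F) B) x by rewrite UF.
  exists (phi B); first by exists B.
  by apply: le_trans rF (inf01_le (fuzzy_image _ phi01) _); exists B.
exists (inf01 (phi @` [set B | r <= phi B])); last first.
  by apply: le_inf01 => [|_ [B rB <-]]; [apply: ltW|].
exists [set B | r <= phi B]; split=> //; apply/seteqP; split=> // x _.
have /sup01_eq1 cov_x := cov x.
have [_ [B [Bx _] <-] rB] := cov_x (fuzzy_image _ phi01) r r0 r1.
by exists B.
Qed.

End FiniteIntersections.

End FuzzyFamilies.

Theorem theorem2p3 (R : realType) (X : Type) (phi : set X -> R) :
  fuzzy_family phi ->
  ((exists T : set X -> R, fuzzifying_topology T /\ pre_subbase T phi) <->
   union_closure phi setT = 1).
Proof.
move=> phi01; rewrite union_closure_setT_eq1 //.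
have cov_cap : covering (fin_cap_closure phi) <-> covering phi.
  by split=> cov x; move: (cov x); rewrite nbhd_sup_fin_cap_closure_setT.
rewrite -cov_cap; split=> [[T [topT preT]]|cov].
  exact: covering_pre_base topT preT.
have cap01 := fuzzy_fin_cap_closure _ phi01.
have cap_min := min_closed_fin_cap_closure _ phi01.
exists (generated_topology (fin_cap_closure phi)); split.
  exact: fuzzifying_topology_generated.
exact: pre_base_generated.
Qed.
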